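(* Consider a discounted Markov decision problem with discount factor $\gamma\in(0,1)$ and the policy mirror descent method as described in the context, with $\pi^{(0)}\in\operatorname{rint}\Pi$. Let $\rho\in\Delta(\mathcal{S})$ and $\vartheta_\rho=\frac1{1-\gamma}\bigl\|d_\rho(\pi^\star)/\rho\bigr\|_\infty$. Suppose the step sizes satisfy $\eta_0>0$ and \[ \eta_{k+1}\ge\frac{\vartheta_\rho}{\vartheta_\rho-1}\eta_k,\qquad k=0,1,2,\dots \] Then for each $k\ge0$, \[ V_\rho(\pi^{(k)})-V_\rho^\star\le\Bigl(1-\frac1{\vartheta_\rho}\Bigr)^k\Bigl(V_\rho(\pi^{(0)})-V_\rho^\star+\frac{D^\star_0}{\eta_0\gamma}\Bigr). \]
   Context: A discounted Markov decision problem (cost-minimization form): finite state set $\mathcal{S}$, finite action set $\mathcal{A}$, transition probabilities $P(s'|s,a)$, cost $R:\mathcal{S}\times\mathcal{A}\to[0,1]$, discount $\gamma$. Policies $\Pi=\Delta(\mathcal{A})^{|\mathcal{S}|}$; $\operatorname{rint}\Pi$ is the set of policies with all entries $\pi_{s,a}>0$. $V_s(\pi)=\mathbf{E}\bigl[\sum_{t\ge0}\gamma^tR(s_t,a_t)\mid s_0=s\bigr]$ with $a_t\sim\pi_{s_t}$, $s_{t+1}\sim P(\cdot|s_t,a_t)$; $V_\rho(\pi)=\sum_s\rho_sV_s(\pi)$; $V^\star_\rho=\min_{\pi\in\Pi}V_\rho(\pi)$; $\pi^\star$ denotes a policy minimizing $V_s$ simultaneously for all $s$. $Q_{s,a}(\pi)=R_{s,a}+\gamma\sum_{s'}P(s'|s,a)V_{s'}(\pi)$,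 $Q_s(\pi)\in\mathbf{R}^{|\mathcal{A}|}$. Discounted state visitation: $d_{s,s'}(\pi)=(1-\gamma)\sum_{t\ge0}\gamma^t\Pr^\pi(s_t=s'\mid s_0=s)$, $d_{\rho,s'}(\pi)=\sum_s\rho_sd_{s,s'}(\pi)$. For $p,q\in\Delta(\mathcal{S})$, $\|p/q\|_\infty=\max_sp_s/q_s$ with $0/0=1$. Bregman divergence: $h:\mathbf{R}^{|\mathcal{A}|}\to\mathbf{R}\cup\{+\infty\}$ is a convex function of Legendre type (proper, closed, essentially smooth, strictly convex on the relative interior of its domain) with $\Delta(\mathcal{A})\subseteq\operatorname{dom}h$ and $\operatorname{rint}\Delta(\mathcal{A})\subseteq\operatorname{rint}\operatorname{dom}h$; $D(p,p')=h(p)-h(p')-\langle\nabla h(p'),p-p'\rangle$. Policy mirror descent: for each $s\in\mathcal{S}$, $\pi^{(k+1)}_s=\arg\min_{p\in\Delta(\mathcal{A})}\{\eta_k\langle Q_s(\pi^{(k)}),p\rangle+D(p,\pi^{(k)}_s)\}$. Notation: $D^\star_k=\sum_{s}d_{\rho,s}(\pi^\star)D(\pi^\star_s,\pi^{(k)}_s)$. *)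

From HB Require Import structures.
From mathcomp Require Import all_boot all_order all_algebra.
From mathcomp Require Import all_classical all_reals all_analysis.
Set Implicit Arguments. Unset Strict Implicit. Unset Printing Implicit Defensive.
Import Order.TTheory GRing.Theory Num.Theory.
Import numFieldNormedType.Exports.
Local Open Scope classical_set_scope.
Local Open Scope ring_scope.

Section MDP.
Variables (R : realType) (S : finType) (n : nat).
(* actions are 'I_n ; distributions over actions are row vectors 'rV[R]_n *)

Definition in_simplex (p : 'rV[R]_n) : Prop :=
  (forall a, 0 <= p 0 a) /\ \sum_a p 0 a = 1.
Definition in_rint_simplex (p : 'rV[R]_n) : Prop :=
  (forall a, 0 < p 0 a) /\ \sum_a p 0 a = 1.
Definition is_distr (rho : S -> R) : Prop :=
  (forall s, 0 <= rho s) /\ \sum_s rho s = 1.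

Definition policy := S -> 'rV[R]_n.
Definition in_Pi (pi : policy) : Prop := forall s, in_simplex (pi s).
Definition in_rint_Pi (pi : policy) : Prop := forall s, in_rint_simplex (pi s).

Variables (P : S -> 'I_n -> S -> R) (Rc : S -> 'I_n -> R) (gamma : R).

Definition Ppi (pi : policy) (s s' : S) : R := \sum_a pi s 0 a * P s a s'.
Definition rpi (pi : policy) (s : S) : R := \sum_a pi s 0 a * Rc s a.

(* Pr^pi(s_t = s' | s_0 = s) *)
Fixpoint stepP (pi : policy) (t : nat) (s s' : S) : R :=
  match t with
  | 0 => (s == s')%:R
  | t'.+1 => \sum_s'' stepP pi t' s s'' * Ppi pi s'' s'
  end.

Definition V (pi : policy) (s : S) : R :=
  limn (fun N => \sum_(0 <= t < N) gamma ^+ t * \sum_s' stepP pi t s s' * rpi pi s').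
Definition Vrho (rho : S -> R) (pi : policy) : R := \sum_s rho s * V pi s.
Definition Vstar (rho : S -> R) : R := inf [set Vrho rho pi | pi in in_Pi].

Definition Q (pi : policy) (s : S) : 'rV[R]_n :=
  \row_a (Rc s a + gamma * \sum_s' P s a s' * V pi s').

Definition dvis (pi : policy) (s s' : S) : R :=
  (1 - gamma) * limn (fun N => \sum_(0 <= t < N) gamma ^+ t * stepP pi t s s').
Definition dvis_rho (rho : S -> R) (pi : policy) (s' : S) : R :=
  \sum_s rho s * dvis pi s s'.

(* ||p/q||_oo = max_s p_s/q_s with 0/0 = 1 (and p_s/0 = +oo for p_s > 0) *)
Definition ratio_norm (p q : S -> R) : \bar R :=
  \big[Order.max/-oo%E]_s
    (if q s == 0 then (if p s == 0 then 1%E else +oo%E) else (p s / q s)%:E).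
Definition vartheta (rho : S -> R) (pistar : policy) : \bar R :=
  ((1 - gamma)^-1)%:E * ratio_norm (dvis_rho rho pistar) rho.
End MDP.

Section Bregman.
Variables (R : realType) (n : nat).
Local Notation V := 'rV[R]_n.

Definition domh (h : V -> \bar R) : set V := [set x | (h x < +oo)%E].

(* gradient of h at x (h is differentiable there when x is in int dom h) *)
Definition gradh (h : V -> \bar R) (x : V) : V :=
  \row_j ('d (fine \o h) x (delta_mx 0 j : V)).

(* convex function of Legendre type (Rockafellar, Sect. 26) *)
Definition legendre (h : V -> \bar R) : Prop :=
  [/\ (forall x, h x != -oo%E) /\ (exists x, (h x < +oo)%E),
      (forall (x y : V) (t : R), 0 < t < 1 ->
          (h (t *: x + (1 - t) *: y)%R <= t%:E * h x + (1 - t)%:E * h y)%E),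
        closed [set xy : V * R | (h xy.1 <= xy.2%:E)%E],
        [/\ (exists x, interior (domh h) x),
            (forall x, interior (domh h) x -> differentiable (fine \o h) x) &
            (forall (u : nat -> V) (x : V), (forall i, interior (domh h) (u i)) ->
               u @ \oo --> x -> ~ interior (domh h) x ->
               (fun i => `|gradh h (u i)|) @ \oo --> +oo)] &
        (forall (x y : V) (t : R), interior (domh h) x -> interior (domh h) y ->
           x != y -> 0 < t < 1 ->
           fine (h (t *: x + (1 - t) *: y)) < t * fine (h x) + (1 - t) * fine (h y))].

(* Bregman divergence D(p,p') = h(p) - h(p') - <grad h(p'), p - p'>
   (real-valued; used only for p, p' in Delta(A), a subset of dom h) *)
Definition bregman (h : V -> \bar R) (p p' : V) : R :=
  fine (h p) - fine (h p') - 'd (fine \o h) p' (p - p').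
End Bregman.

Definition dotv (R : realType) (n : nat) (u v : 'rV[R]_n) : R :=
  \sum_a u 0 a * v 0 a.

From HB Require Import structures.
From mathcomp Require Import all_boot all_order all_algebra.
From mathcomp Require Import all_classical all_reals all_analysis.
From mathcomp Require Import ring lra.
Import Order.TTheory GRing.Theory Num.Theory.
Import numFieldNormedType.Exports.
Local Open Scope classical_set_scope.
Local Open Scope ring_scope.

(* Write Delta_k = V_rho(pi_k) - V*_rho and D_k for the d_rho(pistar)-weighted Bregman
   distance from pi_k to pistar.  The three-point inequality of the mirror step at every
   state, weighted by d_rho(pistar) and combined with the performance-difference lemma, gives
     eta_k (theta (1 - gamma) (Delta_(k+1) - Delta_k) + (1 - gamma) Delta_k) <= D_k - D_(k+1);
   the mismatch coefficient enters through d_rho(pistar) <= theta (1 - gamma) rho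
   <= theta d_rho(pi_(k+1)), applied to the nonpositive advantages of pi_(k+1) over pi_k.
   Under the step-size condition the potential Delta_k + D_k / (eta_k (1 - gamma) (theta - 1))
   therefore contracts by the factor 1 - 1/theta.
   The iterates stay in the interior of dom h, where the Bregman divergences are
   differentiable and nonnegative: were a mirror step on the boundary, its minimality
   would bound the gradient of h along the segment to an interior point, contradicting
   essential smoothness. *)

Lemma cvgn_sum {R : realType} (I : finType) (u : I -> R^nat) (l : I -> R) :
  (forall i, u i N @[N --> \oo] --> l i) ->
  \sum_i u i N @[N --> \oo] --> \sum_i l i.
Proof. by move=> ul; apply: cvg_big => //; exact: add_continuous. Qed.

Lemma cvgn_shiftS_unique {R : realType} {u v : R^nat} {l m : R} :
  u N @[N --> \oo] --> l -> v N @[N --> \oo] --> m ->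
  (forall N, u N.+1 = v N) -> l = m.
Proof.
move=> ul vm uv; have vl : v N @[N --> \oo] --> l.
  have -> : v = [sequence u N.+1]_N by apply/funext => N; rewrite -uv.
  by rewrite cvg_shiftS.
exact: (cvg_unique _ vl vm).
Qed.

Section KroneckerSums.
Variables (K : pzSemiRingType) (I : finType).

Lemma sum_delta_mull (i : I) (f : I -> K) : \sum_j (i == j)%:R * f j = f i.
Proof.
rewrite (bigD1 i) //= eqxx mul1r big1 ?addr0 // => j /negbTE.
by rewrite eq_sym => ->; rewrite mul0r.
Qed.

Lemma sum_delta_mulr (i : I) (f : I -> K) : \sum_j f j * (j == i)%:R = f i.
Proof.
rewrite (bigD1 i) //= eqxx mulr1 big1 ?addr0 // => j /negbTE ->.
by rewrite mulr0.
Qed.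

Lemma sum_delta (i : I) : \sum_j (i == j)%:R = 1 :> K.
Proof.
by rewrite -[RHS](sum_delta_mull i (fun=> 1)); apply: eq_bigr => j _; rewrite mulr1.
Qed.

End KroneckerSums.
Arguments sum_delta_mull {K I}.
Arguments sum_delta_mulr {K I}.
Arguments sum_delta {K I}.

Section Markov.
Context {R : realType} {S : finType} {n : nat}.
Context {P : S -> 'I_n -> S -> R} {Rc : S -> 'I_n -> R} {gamma : R}.
Hypothesis P_stochastic :
  forall s a, (forall s', 0 <= P s a s') /\ \sum_s' P s a s' = 1.
Hypothesis gamma01 : 0 < gamma < 1.

Let gamma_ge0 : 0 <= gamma. Proof. by case/andP: gamma01 => /ltW. Qed.
Let one_minus_gamma_gt0 : 0 < 1 - gamma.
Proof. by case/andP: gamma01 => _; rewrite subr_gt0. Qed.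

Section FixedPolicy.
Variable pi : policy R S n.
Hypothesis pi_Pi : in_Pi pi.

Lemma Ppi_ge0 s s' : 0 <= Ppi P pi s s'.
Proof.
apply: sumr_ge0 => a _; apply: mulr_ge0; first exact: (pi_Pi s).1.
exact: (P_stochastic s a).1.
Qed.

Lemma Ppi_sum1 s : \sum_s' Ppi P pi s s' = 1.
Proof.
rewrite /Ppi exchange_big /= -[RHS](pi_Pi s).2; apply: eq_bigr => a _.
by rewrite -mulr_sumr (P_stochastic s a).2 mulr1.
Qed.

Lemma stepP_ge0 t s s' : 0 <= stepP P pi t s s'.
Proof.
elim: t s' => [|t IH] s' /=; first by rewrite ler0n.
by apply: sumr_ge0 => u _; rewrite mulr_ge0 ?Ppi_ge0.
Qed.

Lemma stepP_sum1 t s : \sum_s' stepP P pi t s s' = 1.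
Proof.
elim: t => [|t IH] /=; first exact: sum_delta.
rewrite exchange_big /= -[RHS]IH; apply: eq_bigr => u _.
by rewrite -mulr_sumr Ppi_sum1 mulr1.
Qed.

Lemma stepP_le1 t s s' : stepP P pi t s s' <= 1.
Proof.
rewrite -(stepP_sum1 t s) (bigD1 s') //= lerDl.
by apply: sumr_ge0 => u _; exact: stepP_ge0.
Qed.

Lemma stepPSl t s s' :
  stepP P pi t.+1 s s' = \sum_u Ppi P pi s u * stepP P pi t u s'.
Proof.
elim: t s' => [|t IH] s'; first by rewrite /= sum_delta_mull sum_delta_mulr.
transitivity (\sum_u stepP P pi t.+1 s u * Ppi P pi u s') => //.
under eq_bigr => u _ do rewrite IH mulr_suml.
rewrite exchange_big /=; apply: eq_bigr => w _.
by rewrite mulr_sumr; apply: eq_bigr => u _; rewrite mulrA.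
Qed.

(* [occ] is the resolvent (I - gamma P_pi)^-1 of the transition matrix. *)
Definition occN N s s' := \sum_(0 <= t < N) gamma ^+ t * stepP P pi t s s'.
Definition occ s s' := limn (fun N => occN N s s').

Lemma dvis_occ s s' : dvis P gamma pi s s' = (1 - gamma) * occ s s'.
Proof. by []. Qed.

Lemma occN_ge0 N s s' : 0 <= occN N s s'.
Proof. by apply: sumr_ge0 => t _; rewrite mulr_ge0 ?exprn_ge0 ?stepP_ge0. Qed.

Lemma occ_cvg s s' : occN N s s' @[N --> \oo] --> occ s s'.
Proof.
apply: nondecreasing_is_cvgn.
  apply/nondecreasing_seqP => N; rewrite /occN big_nat_recr //= lerDl.
  by rewrite mulr_ge0 ?exprn_ge0 ?stepP_ge0.
exists (1 - gamma)^-1 => _ [N _ <-].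
have := @geometric_le_lim R N 1 gamma ler01.
case/andP: gamma01 => g0 g1; rewrite ger0_norm // mul1r => /(_ g0 g1).
apply: le_trans; rewrite /series /=; apply: ler_sum => t _.
by rewrite /geometric mul1r ler_piMr ?exprn_ge0 ?stepP_le1.
Qed.

Lemma occ_ge0 s s' : 0 <= occ s s'.
Proof.
apply: limr_ge; first exact: cvgP (occ_cvg s s').
by apply: nearW => N; exact: occN_ge0.
Qed.

Lemma occNSr N s s' :
  occN N.+1 s s' = (s == s')%:R + gamma * \sum_u occN N s u * Ppi P pi u s'.
Proof.
rewrite /occN big_nat_recl // expr0 mul1r; congr (_ + _).
rewrite mulr_sumr; under [RHS]eq_bigr => u _ do rewrite mulr_suml mulr_sumr.
rewrite [RHS]exchange_big /=; apply: eq_bigr => t _.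
rewrite exprS mulr_sumr; apply: eq_bigr => u _; ring.
Qed.

Lemma occNSl N s s' :
  occN N.+1 s s' = (s == s')%:R + gamma * \sum_u Ppi P pi s u * occN N u s'.
Proof.
rewrite /occN big_nat_recl // expr0 mul1r; congr (_ + _).
rewrite mulr_sumr; under [RHS]eq_bigr => u _ do rewrite !mulr_sumr.
rewrite [RHS]exchange_big; apply: eq_bigr => t _.
rewrite exprS stepPSl !mulr_sumr; apply: eq_bigr => u _; ring.
Qed.

Lemma occ_eqr s s' :
  occ s s' = (s == s')%:R + gamma * \sum_u occ s u * Ppi P pi u s'.
Proof.
apply: (cvgn_shiftS_unique (occ_cvg s s') _ (fun N => occNSr N s s')).
apply: cvgD; first exact: cvg_cst.
apply: cvgM; first exact: cvg_cst.
apply: cvgn_sum => u.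
by apply: cvgM; [exact: occ_cvg | exact: cvg_cst].
Qed.

Lemma occ_eql s s' :
  occ s s' = (s == s')%:R + gamma * \sum_u Ppi P pi s u * occ u s'.
Proof.
apply: (cvgn_shiftS_unique (occ_cvg s s') _ (fun N => occNSl N s s')).
apply: cvgD; first exact: cvg_cst.
apply: cvgM; first exact: cvg_cst.
apply: cvgn_sum => u.
by apply: cvgM; [exact: cvg_cst | exact: occ_cvg].
Qed.

Lemma occ_ge_delta s s' : (s == s')%:R <= occ s s'.
Proof.
rewrite occ_eqr lerDl mulr_ge0 // sumr_ge0 // => u _.
by rewrite mulr_ge0 ?occ_ge0 ?Ppi_ge0.
Qed.

Lemma occ_sum s : \sum_s' occ s s' = (1 - gamma)^-1.
Proof.
have occ_sum_eq : \sum_s' occ s s' = 1 + gamma * \sum_s' occ s s'.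
  under [LHS]eq_bigr do rewrite occ_eqr.
  rewrite big_split /= -mulr_sumr exchange_big /=.
  rewrite sum_delta; congr (1 + _ * _).
  by apply: eq_bigr => u _; rewrite -mulr_sumr Ppi_sum1 mulr1.
apply: (@mulfI _ (1 - gamma)); first by rewrite lt0r_neq0.
by rewrite mulfV ?lt0r_neq0 // mulrBl mul1r {1}occ_sum_eq addrK.
Qed.

Lemma V_occ s : V P Rc gamma pi s = \sum_s' occ s s' * rpi Rc pi s'.
Proof.
apply: cvg_lim => //.
have -> : (fun N => \sum_(0 <= t < N) gamma ^+ t *
      \sum_s' stepP P pi t s s' * rpi Rc pi s') =
   (fun N => \sum_s' occN N s s' * rpi Rc pi s').
  apply: funext => N; rewrite /occN.
  under eq_bigr do rewrite mulr_sumr.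
  rewrite exchange_big /=; apply: eq_bigr => s' _.
  by rewrite mulr_suml; apply: eq_bigr => t _; rewrite mulrA.
apply: cvgn_sum => s'; apply: cvgM; [exact: occ_cvg | exact: cvg_cst].
Qed.

End FixedPolicy.

Lemma dotv_Q (pi pi' : policy R S n) s :
  dotv (Q P Rc gamma pi s) (pi' s) =
  rpi Rc pi' s + gamma * \sum_u Ppi P pi' s u * V P Rc gamma pi u.
Proof.
rewrite /dotv /rpi /Ppi; under eq_bigr do rewrite mxE mulrDl.
rewrite big_split /=; congr (_ + _); first by apply: eq_bigr => a _; rewrite mulrC.
rewrite mulr_sumr; under [RHS]eq_bigr do rewrite mulr_suml mulr_sumr.
rewrite [RHS]exchange_big /=; apply: eq_bigr => a _.
rewrite mulr_sumr mulr_suml; apply: eq_bigr => u _; ring.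
Qed.

Lemma bellman (pi : policy R S n) s : in_Pi pi ->
  V P Rc gamma pi s = rpi Rc pi s + gamma * \sum_u Ppi P pi s u * V P Rc gamma pi u.
Proof.
move=> pi_Pi; rewrite V_occ //.
under eq_bigr do rewrite occ_eql // mulrDl.
rewrite big_split /= sum_delta_mull; congr (_ + _).
rewrite mulr_sumr; under [RHS]eq_bigr do rewrite V_occ // !mulr_sumr.
rewrite [RHS]exchange_big /=; apply: eq_bigr => s' _.
rewrite -mulrA mulr_suml mulr_sumr; apply: eq_bigr => u _; ring.
Qed.

Lemma dotv_Q_self (pi : policy R S n) s : in_Pi pi ->
  dotv (Q P Rc gamma pi s) (pi s) = V P Rc gamma pi s.
Proof. by move=> pi_Pi; rewrite dotv_Q bellman. Qed.

Lemma performance_difference (pi pi' : policy R S n) :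
  in_Pi pi -> in_Pi pi' -> forall s,
  \sum_s' occ pi' s s' *
     (dotv (Q P Rc gamma pi s') (pi' s') - dotv (Q P Rc gamma pi s') (pi s'))
  = V P Rc gamma pi' s - V P Rc gamma pi s.
Proof.
move=> pi_Pi pi'_Pi s; set Vpi := V P Rc gamma pi.
have lookahead : \sum_s' occ pi' s s' * (gamma * \sum_u Ppi P pi' s' u * Vpi u)
    = \sum_u (occ pi' s u - (s == u)%:R) * Vpi u.
  rewrite (eq_bigr (fun s' => \sum_u gamma * (occ pi' s s' * Ppi P pi' s' u) * Vpi u));
    last by move=> s' _; rewrite !mulr_sumr; apply: eq_bigr => u _; ring.
  rewrite exchange_big /=; apply: eq_bigr => u _.
  by rewrite -mulr_suml -mulr_sumr (occ_eqr _ pi'_Pi s u) addrC addKr.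
transitivity (\sum_s' occ pi' s s' * rpi Rc pi' s' +
    \sum_s' occ pi' s s' * (gamma * \sum_u Ppi P pi' s' u * Vpi u) -
    \sum_s' occ pi' s s' * Vpi s').
  rewrite -big_split -sumrB /=; apply: eq_bigr => s' _.
  by rewrite dotv_Q_self // dotv_Q -/Vpi; ring.
rewrite -V_occ // lookahead; under eq_bigr do rewrite mulrBl.
by rewrite sumrB sum_delta_mull; ring.
Qed.

Section InitialDistribution.
Context {rho : S -> R}.
Hypothesis rho_distr : is_distr rho.

Lemma performance_difference_rho (pi pi' : policy R S n) :
  in_Pi pi -> in_Pi pi' ->
  \sum_s' dvis_rho P gamma rho pi' s' *
     (dotv (Q P Rc gamma pi s') (pi' s') - dotv (Q P Rc gamma pi s') (pi s'))
  = (1 - gamma) * (Vrho P Rc gamma rho pi' - Vrho P Rc gamma rho pi).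
Proof.
move=> pi_Pi pi'_Pi; rewrite /Vrho -sumrB mulr_sumr.
under [RHS]eq_bigr do rewrite -mulrBr -(performance_difference _ _ pi_Pi pi'_Pi) !mulr_sumr.
rewrite exchange_big /=; apply: eq_bigr => s' _.
rewrite /dvis_rho mulr_suml; apply: eq_bigr => s _.
by rewrite dvis_occ; ring.
Qed.

Lemma dvis_rho_ge (pi : policy R S n) s' : in_Pi pi ->
  (1 - gamma) * rho s' <= dvis_rho P gamma rho pi s'.
Proof.
move=> pi_Pi; rewrite /dvis_rho (bigD1 s') //= ler_wpDr //.
  by apply: sumr_ge0 => s _; rewrite dvis_occ !mulr_ge0 ?rho_distr.1 ?occ_ge0 ?ltW.
rewrite dvis_occ mulrCA ler_pM2l // -[X in X <= _]mulr1 ler_wpM2l ?rho_distr.1 //.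
by have := occ_ge_delta _ pi_Pi s' s'; rewrite eqxx.
Qed.

Lemma dvis_rho_ge0 (pi : policy R S n) s' : in_Pi pi -> 0 <= dvis_rho P gamma rho pi s'.
Proof.
move=> pi_Pi; apply: le_trans (dvis_rho_ge _ s' pi_Pi).
by rewrite mulr_ge0 ?rho_distr.1 ?ltW.
Qed.

Lemma dvis_rho_sum (pi : policy R S n) : in_Pi pi ->
  \sum_s' dvis_rho P gamma rho pi s' = 1.
Proof.
move=> pi_Pi; rewrite /dvis_rho exchange_big /= -[RHS]rho_distr.2.
apply: eq_bigr => s _; under eq_bigr do rewrite dvis_occ.
by rewrite -mulr_sumr -mulr_sumr occ_sum // mulfV ?lt0r_neq0 // mulr1.
Qed.

Lemma Vstar_optimal (pistar : policy R S n) : in_Pi pistar ->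
  (forall pi s, in_Pi pi -> V P Rc gamma pistar s <= V P Rc gamma pi s) ->
  Vstar P Rc gamma rho = Vrho P Rc gamma rho pistar.
Proof.
move=> pistar_Pi pistar_opt.
have lb : forall pi, in_Pi pi -> Vrho P Rc gamma rho pistar <= Vrho P Rc gamma rho pi.
  by move=> pi pi_Pi; apply: ler_sum => s _; rewrite ler_wpM2l ?rho_distr.1 ?pistar_opt.
apply/eqP; rewrite eq_le; apply/andP; split.
  have /ge_inf : has_lbound [set Vrho P Rc gamma rho pi | pi in @in_Pi R S n].
    by exists (Vrho P Rc gamma rho pistar) => _ [pi + <-]; exact: lb.
  by apply; exists pistar.
apply: lb_le_inf => [|_ [pi + <-]]; last exact: lb.
by exists (Vrho P Rc gamma rho pistar), pistar.
Qed.

End InitialDistribution.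
End Markov.

Section DifferenceQuotients.
Context {R : realType} {n : nat}.
Implicit Types (g : 'rV[R]_n -> R) (x v : 'rV[R]_n) (c : R).

Lemma harmonic_le1 m : harmonic m <= 1 :> R.
Proof. by rewrite /= invf_le1 // ?ler1n // ltr0n. Qed.

Lemma cvg_diff_quotient {g x} v : differentiable g x ->
  (harmonic m)^-1 * (g (harmonic m *: v + x) - g x) @[m --> \oo] --> 'd g x v.
Proof.
move=> dg; rewrite -deriveE //.
apply: ((cvgr_dnbhsP _ 0 _).1 (@diff_derivable _ _ _ g x v dg) harmonic).
by split; [move=> m; rewrite gt_eqF ?harmonic_gt0 | exact: cvg_harmonic].
Qed.

Lemma diff_le_of_quotient_le {g x v c} : differentiable g x ->
  (forall t, 0 < t <= 1 -> g (t *: v + x) - g x <= t * c) -> 'd g x v <= c.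
Proof.
move=> dg le_c; rewrite -(cvg_lim _ (cvg_diff_quotient v dg)) //.
apply: limr_le; first exact: cvgP (cvg_diff_quotient v dg).
apply: nearW => m; rewrite mulrC ler_pdivrMr ?harmonic_gt0 // mulrC.
by apply: le_c; rewrite harmonic_gt0 harmonic_le1.
Qed.

Lemma diff_ge_of_quotient_ge {g x v c} : differentiable g x ->
  (forall t, 0 < t <= 1 -> t * c <= g (t *: v + x) - g x) -> c <= 'd g x v.
Proof.
move=> dg ge_c; rewrite -(cvg_lim _ (cvg_diff_quotient v dg)) //.
apply: limr_ge; first exact: cvgP (cvg_diff_quotient v dg).
apply: nearW => m; rewrite mulrC ler_pdivlMr ?harmonic_gt0 // mulrC.
by apply: ge_c; rewrite harmonic_gt0 harmonic_le1.
Qed.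

End DifferenceQuotients.

Section Legendre.
Context {R : realType} {n : nat} {h : 'rV[R]_n -> \bar R}.
Hypothesis h_legendre : legendre h.
Local Notation f := (fine \o h).

Lemma domh_fineK {x} : domh h x -> h x = (f x)%:E.
Proof.
case: h_legendre => [[h_neq_ninfty _] _ _ _ _] hx.
by rewrite fineK // fin_numE h_neq_ninfty (lt_eqF hx).
Qed.

Lemma convex_segment {x y t} : 0 < t <= 1 -> domh h x -> domh h y ->
  domh h (t *: (x - y) + y) /\ f (t *: (x - y) + y) <= t * f x + (1 - t) * f y.
Proof.
move=> /andP[t_gt0 t_le1] hx hy.
have [->|t_neq1] := eqVneq t 1.
  by rewrite scale1r subrK subrr mul0r mul1r addr0.
have t_lt1 : t < 1 by rewrite lt_neqAle t_neq1.
have -> : t *: (x - y) + y = t *: x + (1 - t) *: y.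
  by rewrite scalerBr scalerBl scale1r addrA addrAC.
case: h_legendre => [_ h_convex _ _ _].
have := h_convex x y t; rewrite t_gt0 t_lt1 => /(_ isT).
rewrite (domh_fineK hx) (domh_fineK hy) -!EFinM -EFinD => hz.
have hz_dom : domh h (t *: x + (1 - t) *: y) by apply: le_lt_trans hz (ltry _).
by split=> //; rewrite -lee_fin -domh_fineK.
Qed.

Lemma differentiable_interior {x} : interior (domh h) x -> differentiable f x.
Proof. by case: h_legendre => [_ _ _ [_ h_diff _] _]; exact: h_diff. Qed.

Lemma diff_le_sub {q p} : interior (domh h) q -> domh h p ->
  'd f q (p - q) <= f p - f q.
Proof.
move=> q_int p_dom; apply: diff_le_of_quotient_le (differentiable_interior q_int) _.
move=> t t01; have [_] := convex_segment t01 p_dom (nbhs_singleton q_int).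
rewrite /=; lra.
Qed.

Lemma bregman_ge0 {p q} : interior (domh h) q -> domh h p -> 0 <= bregman h p q.
Proof. by move=> q_int p_dom; have := diff_le_sub q_int p_dom; rewrite /bregman /=; lra. Qed.

Lemma bregmanxx q : bregman h q q = 0.
Proof. by rewrite /bregman !subrr linear0 subrr. Qed.

Lemma bregman_three_point p q x :
  bregman h p q - bregman h p x - bregman h x q = 'd f x (p - x) - 'd f q (p - x).
Proof.
have split_pq : 'd f q (p - q) = 'd f q (p - x) + 'd f q (x - q).
  by rewrite -linearD addrA subrK.
rewrite /bregman; move: split_pq.
(* The atoms occur at distinct but convertible structure instances; abstracting them
   first keeps [ring] and [lra] from unfolding the differentials. *)
generalize ('d f q (p - q)) ('d f q (p - x)) ('d f q (x - q)) ('d f x (p - x)).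
by generalize (fine (h p)) (fine (h q)) (fine (h x)) => ? ? ? ? ? ? ? ->; ring.
Qed.

Lemma interior_segment {x u t} : domh h x -> interior (domh h) u -> 0 < t <= 1 ->
  interior (domh h) (t *: (u - x) + x).
Proof.
move=> x_dom /nbhs_ballP[e /= e_gt0 ball_dom] t01; have t_gt0 : 0 < t by case/andP: t01.
apply/nbhs_ballP; exists (t * e); first by rewrite /= mulr_gt0.
move=> y; rewrite -ball_normE /= => y_near.
set z := t *: (u - x) + x in y_near *.
set w := u + t^-1 *: (y - z).
have w_dom : domh h w.
  apply: ball_dom; rewrite -ball_normE /= /w opprD addrA subrr add0r normrN normrZ.
  by rewrite ger0_norm ?invr_ge0 ?ltW // distrC mulrC ltr_pdivrMr // mulrC.
have -> : y = t *: (w - x) + x.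
  rewrite /w addrAC scalerDr scalerA mulfV ?gt_eqF // scale1r /z.
  by rewrite opprD !addrA subrK addrC addKr.
exact: (convex_segment t01 w_dom x_dom).1.
Qed.

End Legendre.

Section RowVectors.
Context {R : realType} {n : nat}.
Implicit Types (c v w x p : 'rV[R]_n) (t : R).

Lemma in_simplex_segment {x p t} : in_simplex x -> in_simplex p -> 0 <= t <= 1 ->
  in_simplex (t *: (p - x) + x).
Proof.
move=> [x_ge0 x_sum1] [p_ge0 p_sum1] /andP[t_ge0 t_le1]; split.
  by move=> a; rewrite !mxE; have := x_ge0 a; have := p_ge0 a; nra.
under eq_bigr do rewrite !mxE.
by rewrite big_split /= -mulr_sumr sumrB p_sum1 x_sum1 subrr mulr0 add0r.
Qed.

Lemma dotvDr c v w : dotv c (v + w) = dotv c v + dotv c w.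
Proof. by rewrite /dotv -big_split; apply: eq_bigr => a _; rewrite mxE mulrDr. Qed.

Lemma dotvZr c t v : dotv c (t *: v) = t * dotv c v.
Proof. by rewrite /dotv mulr_sumr; apply: eq_bigr => a _; rewrite mxE mulrCA. Qed.

Lemma dotvBr c v w : dotv c (v - w) = dotv c v - dotv c w.
Proof. by rewrite /dotv -sumrB; apply: eq_bigr => a _; rewrite !mxE mulrBr. Qed.

Lemma mx_norm_row_le v (b : R) : 0 <= b -> (forall j, `|v 0 j| <= b) -> `|v| <= b.
Proof.
move=> b_ge0 v_le; rewrite [`|v|]mx_normrE; apply: bigmax_le => //= -[i j] _.
by rewrite ord1.
Qed.

Lemma normr_delta_mx_le1 j : `|(delta_mx 0 j : 'rV[R]_n)| <= 1.
Proof.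
apply: mx_norm_row_le => // k; rewrite mxE.
by case: (_ && _); rewrite ?normr1 ?normr0.
Qed.

End RowVectors.

Section MirrorStep.
Context {R : realType} {n : nat} {h : 'rV[R]_n -> \bar R}.
Hypothesis h_legendre : legendre h.
Hypothesis simplex_domh : forall p, in_simplex p -> domh h p.
Context {c : 'rV[R]_n} {eta : R} {q x : 'rV[R]_n}.
Hypothesis x_simplex : in_simplex x.
Hypothesis x_min : forall p, in_simplex p ->
  eta * dotv c x + bregman h x q <= eta * dotv c p + bregman h p q.
Local Notation f := (fine \o h).

Lemma mirror_step_segment {p t} : in_simplex p -> 0 <= t <= 1 ->
  f x - f (t *: (p - x) + x) <= t * (eta * dotv c (p - x) - 'd f q (p - x)).
Proof.
move=> p_simplex t01; have := x_min _ (in_simplex_segment x_simplex p_simplex t01).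
have lin : 'd f q (t *: (p - x) + x - q) = t * 'd f q (p - x) + 'd f q (x - q).
  by rewrite -addrA linearD linearZ.
rewrite /bregman lin [dotv c (_ + x)]dotvDr dotvZr /=; lra.
Qed.

Lemma mirror_step_first_order {p} : interior (domh h) x -> in_simplex p ->
  'd f q (p - x) - eta * dotv c (p - x) <= 'd f x (p - x).
Proof.
move=> x_int p_simplex.
apply: diff_ge_of_quotient_ge (differentiable_interior h_legendre x_int) _ => t t01.
have t01' : 0 <= t <= 1 by case/andP: t01 => /ltW -> ->.
by have := mirror_step_segment p_simplex t01'; lra.
Qed.

Lemma mirror_step_three_point {p} : interior (domh h) x -> in_simplex p ->
  eta * dotv c x - eta * dotv c p + bregman h x q <= bregman h p q - bregman h p x.
Proof.
move=> x_int p_simplex; have := mirror_step_first_order x_int p_simplex.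
have := bregman_three_point (h := h) p q x; rewrite dotvBr.
generalize ('d f x (p - x)) ('d f q (p - x)).
generalize (bregman h p q) (bregman h p x) (bregman h x q).
move=> *; lra.
Qed.

Context {u : 'rV[R]_n}.
Hypotheses (u_simplex : in_simplex u) (u_int : interior (domh h) u).
Let L := eta * dotv c (u - x) - 'd f q (u - x).

Lemma mirror_step_diff_le {t y} : 0 < t <= 1 -> domh h y ->
  'd f (t *: (u - x) + x) (y - u) <= f y - f x + L.
Proof.
move=> t01 y_dom; have [t_gt0 t_le1] := andP t01.
set z := t *: (u - x) + x.
have x_dom := simplex_domh _ x_simplex.
have z_int : interior (domh h) z := interior_segment h_legendre x_dom u_int t01.
have seg : f x - f z <= t * L.
  by apply: mirror_step_segment u_simplex _; rewrite ltW.
have xz : x - z = - t *: (u - x) by rewrite /z scaleNr opprD addrCA subrr addr0.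
have yz : y - z = (y - u) + (1 - t) *: (u - x).
  rewrite /z scalerBl scale1r [RHS]addrA subrKA.
  by rewrite opprD addrA addrAC.
have := diff_le_sub h_legendre z_int x_dom; rewrite xz linearZ /=.
have := diff_le_sub h_legendre z_int y_dom; rewrite yz linearD linearZ /=.
move: seg; rewrite /=.
have arith (Dy D : R) : f x - f z <= t * L -> Dy + (1 - t) * D <= f y - f z ->
    - t * D <= f x - f z -> Dy <= f y - f x + L.
  move=> fxz_le Dy_le D_ge.
  have L_le : - L <= D by rewrite -(ler_pM2l t_gt0); lra.
  have : (1 - t) * - L <= (1 - t) * D by rewrite ler_wpM2l // subr_ge0.
  lra.
exact: arith.
Qed.

Lemma mirror_step_gradh_bounded :
  exists K, forall t, 0 < t <= 1 -> `|gradh h (t *: (u - x) + x)| <= K.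
Proof.
have /nbhs_ballP[e /= e_gt0 ball_dom] := u_int.
have eps_gt0 : 0 < e / 2 by rewrite divr_gt0.
have near_dom v : `|v| <= 1 -> domh h (u + (e / 2) *: v).
  move=> v_le1; apply: ball_dom; rewrite -ball_normE /= opprD addrA subrr add0r.
  rewrite normrN normrZ gtr0_norm // (le_lt_trans (ler_wpM2l (ltW eps_gt0) v_le1)) //.
  by rewrite mulr1 ltr_pdivrMr // ltr_pMr // ltr1n.
pose A v := (f (u + (e / 2) *: v) - f x + L) / (e / 2).
exists (\sum_j (`|A (delta_mx 0 j)| + `|A (- delta_mx 0 j)|)) => t t01.
apply: mx_norm_row_le => [|j]; first by apply: sumr_ge0 => j _; rewrite addr_ge0.
have step v : `|v| <= 1 -> 'd f (t *: (u - x) + x) v <= A v.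
  move=> v_le1; rewrite ler_pdivlMr // mulrC.
  have := mirror_step_diff_le t01 (near_dom v v_le1).
  by rewrite [u + _ *: v]addrC addrK linearZ.
have up := step _ (normr_delta_mx_le1 j).
have := step (- delta_mx 0 j); rewrite normrN linearN /= => /(_ (normr_delta_mx_le1 j)) down.
rewrite mxE; apply: (@le_trans _ _ (`|A (delta_mx 0 j)| + `|A (- delta_mx 0 j)|)).
  rewrite ler_norml; apply/andP; split.
    by move: down (ler_norm (A (- delta_mx 0 j))) (normr_ge0 (A (delta_mx 0 j))); lra.
  by move: up (ler_norm (A (delta_mx 0 j))) (normr_ge0 (A (- delta_mx 0 j))); lra.
by rewrite (bigD1 j) //= lerDl sumr_ge0 // => i _; rewrite addr_ge0.
Qed.

Lemma mirror_step_interior : interior (domh h) x.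
Proof.
case: (pselect (interior (domh h) x)) => // x_bd; exfalso.
have [K gradh_le] := mirror_step_gradh_bounded.
pose z m := harmonic m *: (u - x) + x.
have z_int m : interior (domh h) (z m).
  apply: (interior_segment h_legendre (simplex_domh _ x_simplex) u_int).
  by rewrite harmonic_gt0 harmonic_le1.
have z_cvg : z m @[m --> \oo] --> x.
  rewrite -[x in _ --> x](add0r x) -(scale0r (u - x)).
  apply: cvgD; last exact: cvg_cst.
  by apply: cvgZ; [exact: cvg_harmonic | exact: cvg_cst].
case: h_legendre => [_ _ _ [_ _ gradh_blowup] _].
have /cvgryPgt/(_ K)[N _ gradh_gt] := gradh_blowup z x z_int z_cvg x_bd.
have := gradh_gt N (leqnn N).
by rewrite /z /= ltNge gradh_le // harmonic_gt0 harmonic_le1.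
Qed.

End MirrorStep.

Lemma ratio_norm_ge {R : realType} {S : finType} (p q : S -> R) (r : R) s :
  (forall s, 0 <= q s) -> ratio_norm p q = r%:E -> p s <= r * q s.
Proof.
move=> q_ge0 pq_r.
have : ((if q s == 0%R then (if p s == 0%R then 1 else +oo) else (p s / q s)%R%:E)
    <= ratio_norm p q)%E by exact: le_bigmax.
rewrite pq_r; have [q0|q_neq0] := eqVneq (q s) 0.
  by rewrite q0 mulr0; case: eqVneq => [->|_] //; rewrite leye_eq.
by rewrite lee_fin ler_pdivrMr // lt_def q_neq0 q_ge0.
Qed.

Section PolicyMirrorDescent.
Context {R : realType} {S : finType} {n : nat}.
Variables (P : S -> 'I_n -> S -> R) (Rc : S -> 'I_n -> R) (gamma : R).
Variables (h : 'rV[R]_n -> \bar R) (rho : S -> R) (pistar : policy R S n).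
Variables (pi : nat -> policy R S n) (eta : nat -> R) (theta : R).
Hypothesis P_stochastic :
  forall s a, (forall s', 0 <= P s a s') /\ \sum_s' P s a s' = 1.
Hypothesis gamma01 : 0 < gamma < 1.
Hypothesis h_legendre : legendre h.
Hypothesis simplex_domh : forall p, in_simplex p -> domh h p.
Hypothesis rint_simplex_interior : forall p, in_rint_simplex p -> interior (domh h) p.
Hypothesis pistar_Pi : in_Pi pistar.
Hypothesis rho_distr : is_distr rho.
Hypothesis vartheta_theta : vartheta P gamma rho pistar = theta%:E.
Hypothesis pi0_rint : in_rint_Pi (pi 0%N).
Hypothesis pmd_step : forall k s, in_simplex (pi k.+1 s) /\
  forall p, in_simplex p ->
    eta k * dotv (Q P Rc gamma (pi k) s) (pi k.+1 s) + bregman h (pi k.+1 s) (pi k s)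
    <= eta k * dotv (Q P Rc gamma (pi k) s) p + bregman h p (pi k s).
Hypothesis eta0_gt0 : 0 < eta 0%N.
Hypothesis eta_growth : forall k, theta / (theta - 1) * eta k <= eta k.+1.

Local Notation dstar := (dvis_rho P gamma rho pistar).
Local Notation Qk k s := (Q P Rc gamma (pi k) s).
Let c := 1 - gamma.
Let c_gt0 : 0 < c. Proof. by rewrite subr_gt0; case/andP: gamma01. Qed.

Definition pmd_gap k := Vrho P Rc gamma rho (pi k) - Vrho P Rc gamma rho pistar.
Definition pmd_dist k := \sum_s dstar s * bregman h (pistar s) (pi k s).

Lemma pmd_Pi k : in_Pi (pi k).
Proof.
case: k => [|k] s; last exact: (pmd_step k s).1.
by have [pi0_gt0 pi0_sum1] := pi0_rint s; split=> // a; exact: ltW.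
Qed.

Lemma pmd_interior k s : interior (domh h) (pi k s).
Proof.
have pi0_int := rint_simplex_interior _ (pi0_rint s).
elim: k => [|k IH] //.
by apply: (mirror_step_interior h_legendre simplex_domh (pmd_Pi k.+1 s)
  (pmd_step k s).2 (pmd_Pi 0%N s)).
Qed.

Lemma dstar_le s : dstar s <= theta * c * rho s.
Proof.
apply: ratio_norm_ge; first exact: rho_distr.1.
move: vartheta_theta; rewrite /vartheta; case: (ratio_norm _ _) => [r| |] /eqP.
- by rewrite -EFinM eqe => /eqP <-; rewrite /c mulrAC mulVf ?mul1r // lt0r_neq0.
- by rewrite mulr_infty gtr0_sg ?invr_gt0 // mul1e.
- by rewrite mulr_infty gtr0_sg ?invr_gt0 // mul1e.
Qed.

Lemma theta_c_ge1 : 1 <= theta * c.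
Proof.
rewrite -(dvis_rho_sum P_stochastic gamma01 rho_distr _ pistar_Pi) -[X in _ <= X]mulr1.
rewrite -rho_distr.2 mulr_sumr; apply: ler_sum => s _; exact: dstar_le.
Qed.

Lemma theta_gt1 : 1 < theta.
Proof.
have c_lt1 : c < 1 by rewrite /c ltrBlDr ltrDl; case/andP: gamma01.
rewrite ltNge; apply/negP => theta_le1.
by have := ler_piMl (ltW c_gt0) theta_le1; have := theta_c_ge1; lra.
Qed.

Lemma eta_gt0 k : 0 < eta k.
Proof.
elim: k => [|k IH] //; apply: lt_le_trans (eta_growth k).
by rewrite mulr_gt0 // divr_gt0 ?subr_gt0 ?theta_gt1 // (lt_trans ltr01 theta_gt1).
Qed.

Lemma pmd_improvement k s : dotv (Qk k s) (pi k.+1 s) <= dotv (Qk k s) (pi k s).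
Proof.
have := (pmd_step k s).2 _ (pmd_Pi k s); rewrite bregmanxx addr0.
have := bregman_ge0 h_legendre (pmd_interior k s) (simplex_domh _ (pmd_Pi k.+1 s)).
by move=> D_ge0 min_step; rewrite -(ler_pM2l (eta_gt0 k)); lra.
Qed.

Lemma pmd_three_point k s :
  eta k * (dotv (Qk k s) (pi k.+1 s) - dotv (Qk k s) (pistar s))
  <= bregman h (pistar s) (pi k s) - bregman h (pistar s) (pi k.+1 s).
Proof.
have := mirror_step_three_point h_legendre (pmd_Pi k.+1 s) (pmd_step k s).2
  (pmd_interior k.+1 s) (pistar_Pi s).
have := bregman_ge0 h_legendre (pmd_interior k s) (simplex_domh _ (pmd_Pi k.+1 s)).
by rewrite mulrBr; lra.
Qed.

Lemma pmd_weighted_advantage k :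
  theta * c * (pmd_gap k.+1 - pmd_gap k)
  <= \sum_s dstar s * (dotv (Qk k s) (pi k.+1 s) - dotv (Qk k s) (pi k s)).
Proof.
have -> : pmd_gap k.+1 - pmd_gap k =
    Vrho P Rc gamma rho (pi k.+1) - Vrho P Rc gamma rho (pi k).
  by rewrite /pmd_gap opprB addrA subrK.
rewrite -mulrA -(performance_difference_rho P_stochastic gamma01 _ _
  (pmd_Pi k) (pmd_Pi k.+1)) mulr_sumr.
apply: ler_sum => s _; rewrite mulrA.
have adv_le0 : dotv (Qk k s) (pi k.+1 s) - dotv (Qk k s) (pi k s) <= 0.
  by rewrite subr_le0 pmd_improvement.
apply: (@le_trans _ _ (theta * (c * rho s) * (dotv (Qk k s) (pi k.+1 s)
    - dotv (Qk k s) (pi k s)))); last by rewrite ler_wnM2r // mulrA dstar_le.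
rewrite -!mulrA ler_pM2l ?(lt_trans ltr01 theta_gt1) // !mulrA ler_wnM2r //.
by have := dvis_rho_ge P_stochastic gamma01 rho_distr _ s (pmd_Pi k.+1).
Qed.

Lemma pmd_gap_recursion k :
  eta k * (theta * c * (pmd_gap k.+1 - pmd_gap k) + c * pmd_gap k)
  <= pmd_dist k - pmd_dist k.+1.
Proof.
have dist_decrease : \sum_s dstar s *
    (eta k * (dotv (Qk k s) (pi k.+1 s) - dotv (Qk k s) (pistar s)))
    <= pmd_dist k - pmd_dist k.+1.
  rewrite /pmd_dist -sumrB; apply: ler_sum => s _; rewrite -mulrBr ler_wpM2l //.
    exact/(dvis_rho_ge0 P_stochastic gamma01 rho_distr _ s pistar_Pi).
  exact: pmd_three_point.
apply: le_trans dist_decrease.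
rewrite (eq_bigr (fun s => eta k * (dstar s *
    (dotv (Qk k s) (pi k.+1 s) - dotv (Qk k s) (pi k s)) -
    dstar s * (dotv (Qk k s) (pistar s) - dotv (Qk k s) (pi k s))))); last first.
  by move=> s _; ring.
rewrite -mulr_sumr sumrB ler_pM2l ?eta_gt0 //.
rewrite (performance_difference_rho P_stochastic gamma01 _ _ (pmd_Pi k) pistar_Pi).
by have := pmd_weighted_advantage k; rewrite /pmd_gap /c; lra.
Qed.

Definition pmd_potential k :=
  pmd_gap k + pmd_dist k / (eta k * c * (theta - 1)).

Lemma pmd_dist_ge0 k : 0 <= pmd_dist k.
Proof.
apply: sumr_ge0 => s _; apply: mulr_ge0.
  exact/(dvis_rho_ge0 P_stochastic gamma01 rho_distr _ s pistar_Pi).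
exact/(bregman_ge0 h_legendre (pmd_interior k s) (simplex_domh _ (pistar_Pi s))).
Qed.

Lemma pmd_potential_contraction k :
  pmd_potential k.+1 <= (1 - theta^-1) * pmd_potential k.
Proof.
have theta1_gt0 : 0 < theta - 1 by rewrite subr_gt0 theta_gt1.
have theta_gt0 : 0 < theta by rewrite (lt_trans ltr01 theta_gt1).
have e_gt0 := eta_gt0 k; have e1_gt0 := eta_gt0 k.+1.
have e1_ge : theta * eta k <= eta k.+1 * (theta - 1).
  by rewrite -ler_pdivrMr // mulrAC eta_growth.
rewrite /pmd_potential.
have dist1_le : pmd_dist k.+1 / (eta k.+1 * c * (theta - 1))
    <= pmd_dist k.+1 / (eta k * theta * c).
  rewrite ler_wpM2l ?pmd_dist_ge0 // lef_pV2 ?posrE ?mulr_gt0 //.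
  by have := ler_wpM2r (ltW c_gt0) e1_ge; lra.
apply: (@le_trans _ _ (pmd_gap k.+1 + pmd_dist k.+1 / (eta k * theta * c))).
  by rewrite lerD2l.
have -> : (1 - theta^-1) * (pmd_gap k + pmd_dist k / (eta k * c * (theta - 1))) =
    ((theta - 1) * eta k * c * pmd_gap k + pmd_dist k) / (eta k * theta * c).
  by field; rewrite !gt_eqF.
have -> : pmd_gap k.+1 + pmd_dist k.+1 / (eta k * theta * c) =
    (eta k * theta * c * pmd_gap k.+1 + pmd_dist k.+1) / (eta k * theta * c).
  by field; rewrite !gt_eqF.
rewrite ler_pM2r ?invr_gt0 ?mulr_gt0 //.
by have := pmd_gap_recursion k; lra.
Qed.

Lemma pmd_gap_le k :
  pmd_gap k <= (1 - theta^-1) ^+ k * (pmd_gap 0%N + pmd_dist 0%N / (eta 0%N * gamma)).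
Proof.
have theta1_gt0 : 0 < theta - 1 by rewrite subr_gt0 theta_gt1.
have rate_ge0 : 0 <= 1 - theta^-1.
  by rewrite subr_ge0 invf_le1 ?(lt_trans ltr01 theta_gt1) // ltW // theta_gt1.
have gap_le_potential : pmd_gap k <= pmd_potential k.
  by rewrite lerDl divr_ge0 ?pmd_dist_ge0 // ltW // !mulr_gt0 ?eta_gt0.
have potential_le : pmd_potential k <= (1 - theta^-1) ^+ k * pmd_potential 0%N.
  elim: k {gap_le_potential} => [|k IH]; first by rewrite expr0 mul1r.
  apply: le_trans (pmd_potential_contraction k) _.
  by rewrite exprS -mulrA ler_wpM2l.
apply: le_trans gap_le_potential (le_trans potential_le _).
rewrite ler_wpM2l ?exprn_ge0 // lerD2l ler_wpM2l ?pmd_dist_ge0 //.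
have gamma_gt0 : 0 < gamma by case/andP: gamma01.
rewrite lef_pV2 ?posrE ?mulr_gt0 ?eta_gt0 // -mulrA ler_pM2l ?eta_gt0 //.
by have := theta_c_ge1; rewrite /c; lra.
Qed.

End PolicyMirrorDescent.

Theorem theorem10 (R : realType) (S : finType) (n : nat)
  (P : S -> 'I_n -> S -> R) (Rc : S -> 'I_n -> R) (gamma : R)
  (h : 'rV[R]_n -> \bar R)
  (rho : S -> R) (pistar : policy R S n)
  (pi : nat -> policy R S n) (eta : nat -> R) (theta : R) :
  (* the MDP *)
  (forall s a, (forall s', 0 <= P s a s') /\ \sum_s' P s a s' = 1) ->
  (forall s a, 0 <= Rc s a <= 1) ->
  0 < gamma < 1 ->
  (* the mirror map *)
  legendre h ->
  (forall p, in_simplex p -> domh h p) ->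
  (forall p, in_rint_simplex p -> interior (domh h) p) ->
  (* an optimal policy *)
  in_Pi pistar ->
  (forall pi' s, in_Pi pi' -> V P Rc gamma pistar s <= V P Rc gamma pi' s) ->
  is_distr rho ->
  (* vartheta_rho (finite) *)
  vartheta P gamma rho pistar = theta%:E ->
  (* policy mirror descent *)
  in_rint_Pi (pi 0%N) ->
  (forall k s, in_simplex (pi k.+1 s) /\
     forall p, in_simplex p ->
       eta k * dotv (Q P Rc gamma (pi k) s) (pi k.+1 s) + bregman h (pi k.+1 s) (pi k s)
       <= eta k * dotv (Q P Rc gamma (pi k) s) p + bregman h p (pi k s)) ->
  (* step sizes *)
  0 < eta 0%N ->
  (forall k, eta k.+1 >= theta / (theta - 1) * eta k) ->
  forall k,
    Vrho P Rc gamma rho (pi k) - Vstar P Rc gamma rho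
    <= (1 - theta^-1) ^+ k *
       (Vrho P Rc gamma rho (pi 0%N) - Vstar P Rc gamma rho
        + (\sum_s dvis_rho P gamma rho pistar s * bregman h (pistar s) (pi 0%N s))
          / (eta 0%N * gamma)).
Proof.
move=> P_stochastic _ gamma01 h_legendre simplex_domh rint_simplex_interior pistar_Pi
  pistar_opt rho_distr vartheta_theta pi0_rint pmd_step eta0_gt0 eta_growth k.
rewrite (Vstar_optimal rho_distr _ pistar_Pi pistar_opt).
by apply: pmd_gap_le.
Qed.
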